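(* In the supercuspidal setting below, let $p$ be odd and $k\ge c_0+1$. If $p\mid a_1a_2a_3$, then $\widehat H(\psi,a_1,a_2,a_3)=0$ for every Dirichlet character $\psi$ modulo $p^k$.
   Context: Supercuspidal setting: $p$ is a prime, $L/\mathbb Q_p$ a quadratic extension with ring of integers $\mathcal O_L$, ramification index $e\in\{1,2\}$, $d=v_p(\mathrm{disc}(L/\mathbb Q_p))$; $\eta_L$ is the nontrivial quadratic character of $\mathbb Q_p^\times$ trivial on $\mathrm{Nm}(L^\times)$. $\xi$ is a character of $L^\times$ with $\xi\neq\xi\circ(\text{Galois conjugation})$ and $\xi|_{\mathbb Q_p^\times}=\eta_L$ (for $p$ odd, $(L/\mathbb Q_p,\xi)$ is an admissible pair, i.e. corresponds to a trivial central character dihedral supercuspidal representation of $\mathrm{PGL}_2(\mathbb Q_p)$). $c(\xi)$ is its conductor exponent and $c_0=c(\xi)/e$ (a positive integer). Set $\kappa=c_0$ if $p$ odd and $L$ unramified, $\kappa=c_0+1$ if $p$ odd and $L$ ramified; for $p=2$, $\kappa=c_0+199,c_0+101,c_0+102$ according as $d=0,2,3$. Let $\gamma$ be a fixed complex number of modulus $1$ depending only on $L$. For integers $m,n$ and $k\ge1$, $$H(m,n;p^k)=\overline\gamma\,p^{-d/2}\sum_{\substack{t\in(\mathcal O_L/p^k\mathcal O_L)^\times\\ \mathrm{Nm}(t)\equiv mn\ (p^k)}}\xi(t)\,e_{p^k}(-\mathrm{Tr}(t))$$ if $k\ge\kappa$ and $p\nmid mn$, and $H(m,n;p^k)=0$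 otherwise. For a Dirichlet character $\psi$ mod $p^k$ and integers $a_1,a_2,a_3$, $$\widehat H(\psi,a_1,a_2,a_3)=p^{-2k}\sum_{u,x_1,x_2,x_3\bmod p^k}\overline\psi(u)H(\overline u x_1x_2x_3,1;p^k)\,e_{p^k}(a_1x_1+a_2x_2+a_3x_3-ua_1a_2a_3).$$ Here $e_q(x)=\exp(2\pi i x/q)$ (extended $p$-adically), $\overline u$ is the inverse mod $p^k$, and Dirichlet characters vanish on non-units. *)

From HB Require Import structures.
From mathcomp Require Import all_boot all_order all_algebra.
From mathcomp Require Import all_classical all_reals all_analysis.
From mathcomp Require Export complex.
Set Implicit Arguments. Unset Strict Implicit. Unset Printing Implicit Defensive.
Import Order.TTheory GRing.Theory Num.Theory.
Local Open Scope ring_scope.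
Local Open Scope complex_scope.

(* The quadratic extension L/Q_p, p odd, is modelled as L = Q_p(sqrt D)    *)
(* with D an integer such that either p does not divide D and D is not a  *)
(* square mod p (L unramified), or p || D (L ramified).  In both cases    *)
(* O_L = Z_p[sqrt D].  An element a + b sqrt D of Z[sqrt D] (dense in O_L)*)
(* is represented by the pair (a, b) of integers.                          *)

Definition is_sq_mod (p : nat) (D : int) : bool :=
  [exists x : 'I_p, ((x%:Z) ^+ 2 == D %[mod p%:Z])%Z].

Definition quad_ext_data (p : nat) (D : int) : Prop :=
  [/\ prime p, odd p &
      ((~~ (p%:Z %| D)%Z && ~~ is_sq_mod p D)
       || ((p%:Z %| D)%Z && ~~ ((p ^ 2)%:Z %| D)%Z))].

Definition ramified (p : nat) (D : int) : bool := (p%:Z %| D)%Z.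
Definition ram_e (p : nat) (D : int) : nat := if ramified p D then 2 else 1.
Definition disc_d (p : nat) (D : int) : nat := if ramified p D then 1 else 0.

Definition zD := (int * int)%type.
Definition zD_mul (D : int) (z w : zD) : zD :=
  (z.1 * w.1 + D * z.2 * w.2, z.1 * w.2 + z.2 * w.1).
Definition zD_norm (D : int) (z : zD) : int := z.1 ^+ 2 - D * z.2 ^+ 2.
Definition zD_trace (z : zD) : int := 2 * z.1.
Definition zD_conj (z : zD) : zD := (z.1, - z.2).
Definition zD_unit (p : nat) (D : int) (z : zD) : bool :=
  ~~ (p%:Z %| zD_norm D z)%Z.
(* z lies in pi_L^n O_L (pi_L = p if unramified, sqrt D if ramified) *)
Definition in_piPow (p : nat) (D : int) (n : nat) (z : zD) : bool :=
  if ramified p D then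
    ((p ^ uphalf n)%:Z %| z.1)%Z && ((p ^ n./2)%:Z %| z.2)%Z
  else ((p ^ n)%:Z %| z.1)%Z && ((p ^ n)%:Z %| z.2)%Z.

(* A (continuous) character xi of L^x, given by its values on the nonzero *)
(* elements of Z[sqrt D] (which determine it, by density).                *)
Section Chars.
Variable R : realType.
Local Notation C := R[i].

Definition is_char_L (p : nat) (D : int) (xi : zD -> C) : Prop :=
  [/\ forall z, z != (0, 0) -> xi z != 0,
      forall z w, z != (0, 0) -> w != (0, 0) ->
        xi (zD_mul D z w) = xi z * xi w,
      xi (1, 0) = 1 &
      exists2 N : nat, (0 < N)%N &
        forall c d : int, xi (1 + (p ^ N)%:Z * c, (p ^ N)%:Z * d) = 1].

Definition not_galois_inv (xi : zD -> C) : Prop :=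
  exists z : zD, z != (0, 0) /\ xi z != xi (zD_conj z).

(* xi restricted to Q_p^x equals eta_L, i.e. (by definition of eta_L) it is
   a nontrivial character of Q_p^x trivial on Nm(L^x).  Q_p^x is
   represented by the (dense) nonzero integers n ~ (n, 0). *)
Definition restricts_to_etaL (D : int) (xi : zD -> C) : Prop :=
  (forall z : zD, z != (0, 0) -> xi (zD_norm D z, 0) = 1) /\
  (exists n : int, n != 0 /\ xi (n, 0) != 1).

(* xi is trivial on U_L^n = 1 + pi^n O_L  (U_L^0 = O_L^x) *)
Definition trivial_on_U (p : nat) (D : int) (xi : zD -> C) (n : nat) : Prop :=
  forall z : zD, zD_unit p D z -> in_piPow p D n (z.1 - 1, z.2) -> xi z = 1.

Definition is_conductor (p : nat) (D : int) (xi : zD -> C) (c : nat) : Prop :=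
  trivial_on_U p D xi c /\ forall n, (n < c)%N -> ~ trivial_on_U p D xi n.

Definition e_q (q : nat) (x : int) : C :=
  (cos (2 * pi * x%:~R / q%:R)) +i* (sin (2 * pi * x%:~R / q%:R)).

Definition dirichlet_char (q : nat) (psi : nat -> C) : Prop :=
  [/\ forall m n, psi (m * n)%N = psi m * psi n,
      psi 1%N = 1,
      forall n, psi (n + q)%N = psi n &
      forall n, ~~ coprime n q -> psi n = 0].

(* inverse of u modulo q (0 if u is not a unit mod q) *)
Definition invmod (q u : nat) : nat :=
  if [pick w : 'I_q | ((u * w) %% q == 1 %% q)%N] is Some w then val w else 0.

Definition kappa (p : nat) (D : int) (c0 : nat) : nat :=
  if ramified p D then c0.+1 else c0.

Definition Hfun (p : nat) (D : int) (xi : zD -> C) (gamma : C) (c0 k : nat)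
    (m n : int) : C :=
  if (kappa p D c0 <= k)%N && ~~ (p%:Z %| m * n)%Z then
    gamma^* * ((Num.sqrt (p%:R : R))%:C)^-1 ^+ disc_d p D *
    \sum_(a < p ^ k) \sum_(b < p ^ k |
        zD_unit p D (a%:Z, b%:Z) &&
        (zD_norm D (a%:Z, b%:Z) == m * n %[mod (p ^ k)%:Z])%Z)
      xi (a%:Z, b%:Z) * e_q (p ^ k) (- zD_trace (a%:Z, b%:Z))
  else 0.

Definition Hhat (p : nat) (D : int) (xi : zD -> C) (gamma : C) (c0 k : nat)
    (psi : nat -> C) (a1 a2 a3 : int) : C :=
  ((p ^ (2 * k))%:R)^-1 *
  \sum_(u < p ^ k) \sum_(x1 < p ^ k) \sum_(x2 < p ^ k) \sum_(x3 < p ^ k)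
    (psi u)^* *
    Hfun p D xi gamma c0 k ((invmod (p ^ k) u * x1 * x2 * x3)%N%:Z) 1 *
    e_q (p ^ k) (a1 * x1%:Z + a2 * x2%:Z + a3 * x3%:Z - u%:Z * a1 * a2 * a3).

End Chars.

(* Up to the symmetries of Hhat we may assume p | a3; the innermost sum over x3 is then
   sum_x H(m x, 1) e(a3 x) with m = u^-1 x1 x2, and it vanishes on its own.  Expanding H, it is
   a sum over units t = (al, be) of O_L / p^k of xi(t) e(-Tr t) times a sum over the fiber
   {x | m x = Nm t mod p^k}, which (as p | a3) depends only on Nm t modulo p^(k-1).  Translating
   al by p^(k-1) (p-1)/2 preserves xi(t) (because k - 1 >= c0 >= 1) and Nm t modulo p^(k-1),
   but multiplies e(-Tr t) by the primitive p-th root of unity e(1/p); hence the sum is 0.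
   The bound c0 >= 1 holds because a character trivial on O_L^x is Galois invariant when L is
   unramified and trivial on Q_p^x when L is ramified (every element is p^n times a unit). *)

From HB Require Import structures.
From mathcomp Require Import all_boot all_order all_algebra.
From mathcomp Require Import all_classical all_reals all_analysis.
From mathcomp Require Import complex ring.
Set Implicit Arguments. Unset Strict Implicit. Unset Printing Implicit Defensive.
Import Order.TTheory GRing.Theory Num.Theory.
Local Open Scope ring_scope.
Local Open Scope complex_scope.

Section AdditiveCharacter.
Variable R : realType.

Lemma e_qD q x y : e_q R q (x + y) = e_q R q x * e_q R q y.
Proof.
rewrite /e_q intrD mulrDr mulrDl cosD sinD.
by congr (_ +i* _); rewrite addrC.
Qed.

Lemma e_q0 q : e_q R q 0 = 1.
Proof. by rewrite /e_q mulr0 mul0r cos0 sin0. Qed.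

Lemma e_qq q : (0 < q)%N -> e_q R q q%:Z = 1.
Proof.
move=> q0; rewrite /e_q -mulrA pmulrn mulfV ?pnatr_eq0 -?lt0n // mulr1.
by rewrite mulr_natl cos2pi sin2pi.
Qed.

Lemma e_q_mulz q n : (0 < q)%N -> e_q R q (q%:Z * n) = 1.
Proof.
move=> q_gt0; have e_q_muln m : e_q R q (q%:Z * m%:Z) = 1.
  elim: m => [|m IHm]; first by rewrite mulr0 e_q0.
  by rewrite -addn1 PoszD mulrDr e_qD IHm mulr1 e_qq // mul1r.
case: n => m; first exact: e_q_muln.
have := e_qD q (q%:Z * Negz m) (q%:Z * m.+1%:Z).
by rewrite -mulrDr NegzE addNr mulr0 e_q0 e_q_muln mulr1.
Qed.

Lemma e_q_eqmod q x y : (0 < q)%N -> (q%:Z %| x - y)%Z -> e_q R q x = e_q R q y.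
Proof.
move=> q_gt0 /dvdzP [n xyE]; rewrite -(subrK y x) xyE e_qD (mulrC n).
by rewrite e_q_mulz // mul1r.
Qed.

Lemma e_q_neq1 m n : (2 < n)%N -> (0 < m)%N -> e_q R (m * n) m%:Z != 1.
Proof.
move=> n_gt2 m_gt0; have n_gt0 : (0 < n)%N by apply: ltn_trans n_gt2.
rewrite /e_q pmulrn natrM invfM mulrA mulfK ?pnatr_eq0 -?lt0n //.
have : 0 < sin (2 * pi / n%:R : R).
  apply: sin_gt0_pi; rewrite divr_gt0 ?mulr_gt0 ?pi_gt0 ?ltr0n //=.
  by rewrite ltr_pdivrMr ?ltr0n // mulrC ltr_pM2l ?pi_gt0 ?ltr_nat.
by apply: contraTN => /eqP [_ ->]; rewrite ltxx.
Qed.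

End AdditiveCharacter.

Definition ord_addmod q (q_gt0 : (0 < q)%N) (c : nat) (i : 'I_q) : 'I_q :=
  Ordinal (ltn_pmod (i + c) q_gt0).

Lemma ord_addmod_inj q q_gt0 c : injective (@ord_addmod q q_gt0 c).
Proof.
move=> i j /(congr1 val) /eqP; rewrite /= eqn_modDr !modn_small ?ltn_ord //.
by move/eqP/val_inj.
Qed.

Lemma ord_addmodE q q_gt0 c i :
  (@ord_addmod q q_gt0 c i)%:Z = i%:Z + c%:Z - q%:Z * ((i + c) %/ q)%N%:Z.
Proof. by rewrite /= -PoszD {2}(divn_eq (i + c) q) PoszD !PoszM; ring. Qed.

Lemma sum_eq0_of_shift_mul (F : fieldType) q q_gt0 c (f : 'I_q -> F) (z : F) :
  z != 1 -> (forall i, f (@ord_addmod q q_gt0 c i) = z * f i) ->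
  \sum_(i < q) f i = 0.
Proof.
move=> z_neq1 fS; have : \sum_(i < q) f i = z * \sum_(i < q) f i.
  rewrite {1}(reindex_inj (@ord_addmod_inj _ q_gt0 c)) big_distrr /=.
  exact: eq_bigr.
move/eqP; rewrite -subr_eq0 -{1}[\sum_i _]mul1r -mulrBl mulf_eq0 subr_eq0.
by rewrite eq_sym (negbTE z_neq1) => /eqP.
Qed.

Section FiberSum.
Variable R : realType.

Definition fiber_sum q (M a n : int) : R[i] :=
  \sum_(x < q) if (n == M * x%:Z %[mod q%:Z])%Z then e_q R q (a * x%:Z) else 0.

Lemma fiber_sum_periodic q M a t n : (0 < q)%N -> coprimez M q%:Z ->
  (q%:Z %| t * a)%Z -> fiber_sum q M a (n + t) = fiber_sum q M a n.
Proof.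
move=> q_gt0 /coprimezP [[u v] /= uvE] /dvdzP [a' taE].
set c := `|(t * u %% q%:Z)%Z|%N; set w := (t * u %/ q%:Z)%Z.
have cE : c%:Z = t * u - w * q%:Z.
  by rewrite gez0_abs ?modz_ge0 ?eqz_nat -?lt0n // {2}(divz_eq (t * u) q%:Z) addrC addKr.
rewrite /fiber_sum [LHS](reindex_inj (@ord_addmod_inj _ q_gt0 c)).
apply: eq_bigr => x _; rewrite ord_addmodE; set w' := ((x + c) %/ q)%N.
congr (if _ then _ else _).
  rewrite !eqz_mod_dvd.
  have -> : n + t - M * (x%:Z + c%:Z - q%:Z * w'%:Z) =
      n - M * x%:Z + q%:Z * (t * v + M * (w + w'%:Z)).
    by rewrite cE -[t in n + t]mulr1 -uvE; ring.
  by rewrite rpredDr // dvdz_mulr.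
apply: e_q_eqmod => //; apply/dvdzP; exists (a' * u - a * (w + w'%:Z)).
rewrite cE; transitivity ((t * a) * u - a * (w + w'%:Z) * q%:Z); first ring.
by rewrite taE; ring.
Qed.

End FiberSum.

Lemma zD_norm_shift D a b s1 s2 P :
  zD_norm D (a + P * s1, b + P * s2) = zD_norm D (a, b) +
    P * (2 * a * s1 + P * s1 ^+ 2 - 2 * D * b * s2 - D * P * s2 ^+ 2).
Proof. by rewrite /zD_norm /=; ring. Qed.

Lemma zD_unit_shift p D a b s1 s2 P : (p%:Z %| P)%Z ->
  zD_unit p D (a + P * s1, b + P * s2) = zD_unit p D (a, b).
Proof. by move=> pP; rewrite /zD_unit zD_norm_shift rpredDr // dvdz_mulr. Qed.

Lemma zD_unit_neq0 p D z : zD_unit p D z -> z != (0, 0).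
Proof. by apply: contraNN => /eqP ->; rewrite /zD_unit /zD_norm /= expr0n mulr0 subr0. Qed.

Lemma zD_unit1 p D : prime p -> zD_unit p D (1, 0).
Proof.
move=> p_prime; rewrite /zD_unit /zD_norm /= expr0n mulr0 subr0 dvdz1 /=.
by rewrite neq_ltn prime_gt1 ?orbT.
Qed.

Lemma zD_mul_scalar D m z : zD_mul D (m, 0) z = (m * z.1, m * z.2).
Proof. by rewrite /zD_mul /=; congr (_, _); ring. Qed.

Lemma dvdz_expn p K : (0 < K)%N -> (p%:Z %| (p ^ K)%:Z)%Z.
Proof. by move=> K_gt0; rewrite dvdzE /= dvdn_exp. Qed.

Lemma dvdz_prime_mul p x y : prime p ->
  (p%:Z %| x * y)%Z = (p%:Z %| x)%Z || (p%:Z %| y)%Z.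
Proof. by move=> p_prime; rewrite !dvdzE abszM Euclid_dvdM. Qed.

Lemma is_sq_modP p D x : (0 < p)%N -> (p%:Z %| x ^+ 2 - D)%Z -> is_sq_mod p D.
Proof.
move=> p_gt0 p_dvd; have p_neq0 : p%:Z != 0 by rewrite eqz_nat -lt0n.
have xp_lt : (`|(x %% p%:Z)%Z| < p)%N.
  by rewrite -ltz_nat gez0_abs ?modz_ge0 ?ltz_pmod ?ltz_nat.
apply/existsP; exists (Ordinal xp_lt) => /=.
by rewrite gez0_abs ?modz_ge0 // modzXm eqz_mod_dvd.
Qed.

Lemma zD_unit_nonsquare p D a b : prime p -> ~~ is_sq_mod p D ->
  ~~ ((p%:Z %| a)%Z && (p%:Z %| b)%Z) -> zD_unit p D (a, b).
Proof.
move=> p_prime D_nsq; apply: contraR; rewrite /zD_unit /zD_norm negbK /= => p_dvd_N.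
have p_dvd_b : (p%:Z %| b)%Z.
  apply: contraR D_nsq => p_ndvd_b.
  have : coprimez b p%:Z.
    by rewrite coprimezE /= coprime_sym prime_coprime // -(dvdzE p%:Z).
  (* With u the inverse of b modulo p, a u is a square root of D modulo p. *)
  case/coprimezP=> -[u v] /= uvE; apply: (@is_sq_modP _ _ (a * u)); first exact: prime_gt0.
  have -> : (a * u) ^+ 2 - D =
      u ^+ 2 * (a ^+ 2 - D * b ^+ 2) - D * v * p%:Z * (2 * u * b + v * p%:Z).
    transitivity (u ^+ 2 * (a ^+ 2 - D * b ^+ 2) - D * v * p%:Z * (2 * u * b + v * p%:Z)
                  + D * ((u * b + v * p%:Z) ^+ 2 - 1)); first ring.
    by rewrite uvE expr1n subrr mulr0 addr0.
  by apply: rpredB; [exact: dvdz_mull | exact/dvdz_mulr/dvdz_mull/dvdzz].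
rewrite p_dvd_b andbT.
have : (p%:Z %| a ^+ 2 - D * b ^+ 2 + D * b * b)%Z by rewrite rpredD ?dvdz_mull.
by rewrite -mulrA -expr2 subrK expr2 dvdz_prime_mul // orbb.
Qed.

Lemma zD_scale_ind p (Pr : zD -> Prop) : (1 < p)%N ->
  (forall z, z != (0, 0) -> ~~ ((p%:Z %| z.1)%Z && (p%:Z %| z.2)%Z) -> Pr z) ->
  (forall z, z != (0, 0) -> Pr z -> Pr (p%:Z * z.1, p%:Z * z.2)) ->
  forall z, z != (0, 0) -> Pr z.
Proof.
move=> p_gt1 base step z; have [n] := ubnP (`|z.1| + `|z.2|)%N.
elim: n z => // n IH [a b] /=.
have [|p_ndvd] := boolP ((p%:Z %| a)%Z && (p%:Z %| b)%Z); last by move=> _ /base; apply.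
case/andP=> /dvdzP[a' ->] /dvdzP[b' ->] size_lt z_neq0.
have z'_neq0 : (a', b') != (0, 0).
  by apply: contraNneq z_neq0 => -[-> ->]; rewrite !mul0r.
rewrite (mulrC a') (mulrC b'); apply: (step (a', b')) => //; apply: IH => //=.
rewrite -ltnS (leq_trans _ size_lt) // !abszM /= -mulnDl ltnS ltn_Pmulr //.
by rewrite lt0n addn_eq0 !absz_eq0; move: z'_neq0; apply: contraNN => /andP[/eqP-> /eqP->].
Qed.

Definition trivial_mod_pow (R : realType) p D (xi : zD -> R[i]) n : Prop :=
  forall z, zD_unit p D z -> ((p ^ n)%:Z %| z.1 - 1)%Z -> ((p ^ n)%:Z %| z.2)%Z ->
    xi z = 1.

Lemma trivial_mod_pow_of_U (R : realType) p D (xi : zD -> R[i]) n :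
  trivial_on_U p D xi (ram_e p D * n) -> trivial_mod_pow p D xi n.
Proof.
move=> xi_triv z z_unit n_dvd1 n_dvd2; apply: xi_triv => //.
rewrite /in_piPow /ram_e; case: (ramified p D); last by rewrite mul1n n_dvd1 n_dvd2.
by rewrite natn mul2n uphalf_double half_double n_dvd1 n_dvd2.
Qed.

Section CharacterPeriodicity.
Variables (R : realType) (p : nat) (D : int) (xi : zD -> R[i]) (c0 K : nat).
Hypotheses (p_prime : prime p) (xi_char : is_char_L p D xi).
Hypotheses (xi_triv : trivial_mod_pow p D xi c0) (K_gt0 : (0 < K)%N) (c0_leK : (c0 <= K)%N).

Local Notation P := (p ^ K)%N%:Z.

Lemma zD_unit_near1 X Y : zD_unit p D (1 + P * X, P * Y).
Proof. by rewrite -[P * Y]add0r zD_unit_shift ?dvdz_expn ?zD_unit1. Qed.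

Lemma xi_near1 X Y : xi (1 + P * X, P * Y) = 1.
Proof.
have c0P : ((p ^ c0)%:Z %| P)%Z by rewrite dvdzE /= dvdn_exp2l.
apply: xi_triv => /=; [exact: zD_unit_near1 | | exact: dvdz_mulr].
by rewrite addrC addKr dvdz_mulr.
Qed.

Lemma xi_shift a b s1 s2 : zD_unit p D (a, b) ->
  xi (a + P * s1, b + P * s2) = xi (a, b).
Proof.
(* Multiplying by an inverse t of (a, b) modulo p^K brings both sides into 1 + p^K O_L. *)
move=> ab_unit; case: xi_char => xi_neq0 xiM _ _.
have : coprimez (zD_norm D (a, b)) P.
  rewrite coprimezE /=; apply: coprimeXr.
  by rewrite coprime_sym prime_coprime // -(dvdzE p%:Z).
case/coprimezP=> -[u v] /= uvE.
set t := (a * u, - b * u).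
have tE : zD_mul D (a, b) t = (1 + P * - v, P * 0).
  by rewrite -uvE /zD_mul /zD_norm /=; congr (_, _); ring.
have stE : zD_mul D (a + P * s1, b + P * s2) t =
    (1 + P * (- v + s1 * a * u - D * s2 * b * u), P * (s2 * a * u - s1 * b * u)).
  by rewrite -[1 in RHS]uvE /zD_mul /zD_norm /=; congr (_, _); ring.
have t_neq0 : t != (0, 0).
  have := zD_unit_neq0 (zD_unit_near1 (- v) 0); rewrite -tE; apply: contra_neq => ->.
  by rewrite /zD_mul /= !mulr0 addr0.
have st_unit : zD_unit p D (a + P * s1, b + P * s2) by rewrite zD_unit_shift ?dvdz_expn.
have := xiM _ _ (zD_unit_neq0 ab_unit) t_neq0.
have := xiM _ _ (zD_unit_neq0 st_unit) t_neq0.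
rewrite tE stE !xi_near1 => /esym st_t /esym ab_t.
by apply: (mulIf (xi_neq0 _ t_neq0)); rewrite st_t ab_t.
Qed.
End CharacterPeriodicity.

Section UnitTrivialCharacter.
Variables (R : realType) (p : nat) (D : int) (xi : zD -> R[i]).
Hypotheses (p_prime : prime p) (xi_char : is_char_L p D xi).
Hypothesis xi_unit : forall z, zD_unit p D z -> xi z = 1.

Let p_neq0 : p%:Z != 0. Proof. by rewrite eqz_nat -lt0n prime_gt0. Qed.

Lemma xi_scale z : z != (0, 0) -> xi (p%:Z * z.1, p%:Z * z.2) = xi (p%:Z, 0) * xi z.
Proof.
case: xi_char => _ xiM _ _ z_neq0; rewrite -(zD_mul_scalar D) xiM //.
by rewrite xpair_eqE (negbTE p_neq0).
Qed.

Lemma xi_conj_unram : ~~ is_sq_mod p D ->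
  forall z, z != (0, 0) -> xi (zD_conj z) = xi z.
Proof.
move=> D_nsq.
apply: (zD_scale_ind (Pr := fun z => xi (zD_conj z) = xi z) (prime_gt1 p_prime)) =>
  [[a b] _ ab_prim|z z_neq0 IH].
  by rewrite !xi_unit ?zD_unit_nonsquare //= rpredN.
have -> : zD_conj (p%:Z * z.1, p%:Z * z.2) = (p%:Z * (zD_conj z).1, p%:Z * (zD_conj z).2).
  by rewrite /zD_conj /= mulrN.
rewrite !xi_scale ?IH //.
by move: z_neq0; case: (z) => a b; rewrite /zD_conj !xpair_eqE oppr_eq0.
Qed.

Lemma xi_int_ram : (p%:Z %| D)%Z -> ~~ ((p ^ 2)%:Z %| D)%Z ->
  (forall z, z != (0, 0) -> xi (zD_norm D z, 0) = 1) ->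
  forall n, n != 0 -> xi (n, 0) = 1.
Proof.
case/dvdzP=> D1 DE D_sqfree xi_norm n n_neq0.
have D1_unit : zD_unit p D (- D1, 0).
  rewrite /zD_unit /zD_norm /= expr0n mulr0 subr0 sqrrN expr2 dvdz_prime_mul // orbb.
  apply: contra D_sqfree => /dvdzP[D2 D1E].
  by rewrite DE D1E -mulrA -mulnn PoszM dvdz_mull.
have xi_p : xi (p%:Z, 0) = 1.
  have := xi_scale (zD_unit_neq0 D1_unit); rewrite /= mulr0 (xi_unit D1_unit) mulr1 => <-.
  have -> : (p%:Z * - D1, 0) = (zD_norm D (0, 1), 0) :> zD.
    by rewrite /zD_norm DE /=; congr (_, _); ring.
  exact: xi_norm.
suff xi_int : forall z : zD, z != (0, 0) -> z.2 = 0 -> xi z = 1.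
  by apply: (xi_int (n, 0)); rewrite // xpair_eqE (negbTE n_neq0).
apply: (zD_scale_ind (Pr := fun z => z.2 = 0 -> xi z = 1) (prime_gt1 p_prime)).
  move=> [a b] _ /= + b0; rewrite b0 dvdz0 andbT => p_ndvd_a; apply: xi_unit.
  by rewrite /zD_unit /zD_norm /= expr0n mulr0 subr0 expr2 dvdz_prime_mul // orbb.
move=> z z_neq0 IH /= /eqP; rewrite mulf_eq0 (negbTE p_neq0) => /eqP z2_eq0.
by rewrite xi_scale // xi_p IH // mulr1.
Qed.

End UnitTrivialCharacter.

Lemma xi_nontrivial_on_units (R : realType) p D (xi : zD -> R[i]) :
  quad_ext_data p D -> is_char_L p D xi -> not_galois_inv xi ->
  restricts_to_etaL D xi -> ~ (forall z, zD_unit p D z -> xi z = 1).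
Proof.
move=> [p_prime _ /orP[/andP[_ D_nsq] | /andP[p_dvd_D D_sqfree]]] xi_char.
  move=> [z [z_neq0 xi_z]] _ xi_unit; move: xi_z.
  by rewrite (xi_conj_unram p_prime xi_char xi_unit D_nsq z_neq0) eqxx.
move=> _ [xi_norm [n [n_neq0 xi_n]]] xi_unit; move: xi_n.
by rewrite (xi_int_ram p_prime xi_char xi_unit p_dvd_D D_sqfree xi_norm n_neq0) eqxx.
Qed.

Section TwistedSum.
Variables (R : realType) (p : nat) (D : int) (xi : zD -> R[i]) (gamma : R[i]).
Variables (c0 K : nat).
Hypotheses (p_prime : prime p) (p_odd : odd p) (xi_char : is_char_L p D xi).
Hypotheses (xi_triv : trivial_mod_pow p D xi c0) (K_gt0 : (0 < K)%N).
Hypotheses (c0_leK : (c0 <= K)%N) (kappa_le : (kappa p D c0 <= K.+1)%N).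

Local Notation q := (p ^ K.+1)%N.
Local Notation P := (p ^ K)%N%:Z.
Local Notation H m := (Hfun p D xi gamma c0 K.+1 m 1).
Local Notation hterm al be := (xi (al%:Z, be%:Z) * e_q R q (- zD_trace (al%:Z, be%:Z))).

Let q_gt0 : (0 < q)%N. Proof. by rewrite expn_gt0 prime_gt0. Qed.
Let qE : q%:Z = P * p%:Z. Proof. by rewrite expnSr PoszM. Qed.

Lemma HfunE m : H m = gamma^* * ((Num.sqrt (p%:R : R))%:C)^-1 ^+ disc_d p D *
  \sum_(al < q) \sum_(be < q | zD_unit p D (al%:Z, be%:Z) &&
                               (zD_norm D (al%:Z, be%:Z) == m %[mod q%:Z])%Z) hterm al be.
Proof.
rewrite /Hfun kappa_le mulr1 /=; case: ifP => // /negbFE p_dvd_m.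
rewrite big1 ?mulr0 // => al _; apply: big_pred0 => be.
apply/negP => /andP[]; rewrite /zD_unit eqz_mod_dvd => /negP + q_dvd; apply.
by rewrite -(subrK m (zD_norm _ _)) rpredD // (dvdz_trans (dvdz_expn p (ltn0Sn K))).
Qed.

Lemma sum_Hfun_twisted_eq0 (M : nat) (a : int) : (p%:Z %| a)%Z ->
  \sum_(x < q) H (M * x)%N%:Z * e_q R q (a * x%:Z) = 0.
Proof.
move=> /dvdzP [a' aE].
have [p_dvd_M | p_ndvd_M] := boolP (p%:Z %| M%:Z)%Z.
  apply: big1 => x _; rewrite /Hfun PoszM mulr1 (dvdz_mulr _ p_dvd_M) andbF.
  exact: mul0r.
pose F (al : 'I_q) := \sum_(be < q) if zD_unit p D (al%:Z, be%:Z) then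
  hterm al be * fiber_sum R q M a (zD_norm D (al%:Z, be%:Z)) else 0.
pose C := gamma^* * ((Num.sqrt (p%:R : R))%:C)^-1 ^+ disc_d p D.
transitivity (C * \sum_(al < q) F al).
  under eq_bigr => x _ do rewrite HfunE -/C -mulrA.
  rewrite -big_distrr /=; congr (_ * _).
  under eq_bigr => x _ do rewrite big_distrl.
  rewrite exchange_big; apply: eq_bigr => al _ /=.
  under eq_bigr => x _ do rewrite big_mkcond big_distrl.
  rewrite /F exchange_big; apply: eq_bigr => be _ /=.
  case: ifP => al_be_unit /=; last by rewrite big1 // => x _; rewrite mul0r.
  rewrite /fiber_sum big_distrr; apply: eq_bigr => x _ /=.
  by rewrite PoszM; case: ifP; rewrite ?mul0r ?mulr0.
have M_coprime : coprimez M%:Z q%:Z.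
  rewrite coprimezE /=; apply: coprimeXr.
  by rewrite coprime_sym prime_coprime // -(dvdzE p%:Z).
have p_gt2 : (2 < p)%N.
  by rewrite ltn_neqAle prime_gt1 // andbT; apply: contraTneq p_odd => <-.
rewrite (@sum_eq0_of_shift_mul _ _ q_gt0 (p ^ K * p./2) _ (e_q R q P)) ?mulr0 //.
  by rewrite expnSr e_q_neq1 // expn_gt0 prime_gt0.
move=> al; rewrite /F big_distrr; apply: eq_bigr => be _ /=.
set s := (p./2)%:Z - p%:Z * ((al + p ^ K * p./2) %/ q)%N%:Z.
have -> : (ord_addmod q_gt0 (p ^ K * p./2) al)%:Z = al%:Z + P * s.
  by rewrite ord_addmodE qE PoszM /s; ring.
have := zD_unit_shift D al be s 0 (dvdz_expn p K_gt0); rewrite mulr0 addr0 => ->.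
case: ifP => [al_be_unit|_]; last by rewrite mulr0.
have := xi_shift p_prime xi_char xi_triv K_gt0 c0_leK s 0 al_be_unit.
rewrite mulr0 addr0 => ->.
have -> : zD_norm D (al%:Z + P * s, be%:Z) =
    zD_norm D (al%:Z, be%:Z) + P * (2 * al%:Z * s + P * s ^+ 2).
  by rewrite /zD_norm /=; ring.
rewrite fiber_sum_periodic //; last first.
  by apply/dvdzP; exists ((2 * al%:Z * s + P * s ^+ 2) * a'); rewrite aE qE /s; ring.
have -> : e_q R q (- zD_trace (al%:Z + P * s, be%:Z)) =
    e_q R q P * e_q R q (- zD_trace (al%:Z, be%:Z)).
  rewrite -e_qD; apply: e_q_eqmod => //; apply/dvdzP.
  exists (2 * ((al + p ^ K * p./2) %/ q)%N%:Z - 1).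
  have halfE : (p./2)%:Z * 2 + 1 = p%:Z.
    have halfnE : (p./2 * 2 + 1)%N = p by rewrite muln2 addnC -[RHS]odd_double_half p_odd.
    by rewrite -[in RHS]halfnE PoszD PoszM.
  rewrite /zD_trace /= /s qE; set w := ((al + p ^ K * p./2) %/ q)%N.
  transitivity ((2 * w%:Z - 1) * (P * p%:Z) + P * (p%:Z - ((p./2)%:Z * 2 + 1))).
    by rewrite /w; ring.
  by rewrite halfE subrr mulr0 addr0.
by rewrite mulrCA !mulrA.
Qed.
End TwistedSum.

Section HhatSymmetry.
Variables (R : realType) (p : nat) (D : int) (xi : zD -> R[i]) (gamma : R[i]).
Variables (c0 k : nat) (psi : nat -> R[i]).

Local Notation Hhat := (Hhat p D xi gamma c0 k psi).

Lemma Hhat_swap12 a1 a2 a3 : Hhat a1 a2 a3 = Hhat a2 a1 a3.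
Proof.
rewrite /Hhat; congr (_ * _); apply: eq_bigr => u _; rewrite exchange_big.
apply: eq_bigr => x2 _; apply: eq_bigr => x1 _; apply: eq_bigr => x3 _.
by rewrite (mulnAC _ x1); congr (_ * _ * e_q _ _ _); ring.
Qed.

Lemma Hhat_swap23 a1 a2 a3 : Hhat a1 a2 a3 = Hhat a1 a3 a2.
Proof.
rewrite /Hhat; congr (_ * _); apply: eq_bigr => u _; apply: eq_bigr => x1 _.
rewrite exchange_big; apply: eq_bigr => x3 _; apply: eq_bigr => x2 _.
by rewrite (mulnAC _ x2); congr (_ * _ * e_q _ _ _); ring.
Qed.

Lemma Hhat_eq0_of_twisted a1 a2 a3 :
  (forall M : nat, \sum_(x < p ^ k)
     Hfun p D xi gamma c0 k (M * x)%N%:Z 1 * e_q R (p ^ k) (a3 * x%:Z) = 0) ->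
  Hhat a1 a2 a3 = 0.
Proof.
move=> twisted_eq0; rewrite /Hhat big1 ?mulr0 // => u _.
apply: big1 => x1 _; apply: big1 => x2 _.
set iu := invmod (p ^ k) u; set phase := a1 * x1%:Z + a2 * x2%:Z - u%:Z * a1 * a2 * a3.
transitivity ((psi u)^* * e_q R (p ^ k) phase * \sum_(x3 < p ^ k)
   Hfun p D xi gamma c0 k (iu * x1 * x2 * x3)%N%:Z 1 * e_q R (p ^ k) (a3 * x3%:Z));
  last by rewrite twisted_eq0 mulr0.
rewrite big_distrr; apply: eq_bigr => x3 _ /=.
have -> : a1 * x1%:Z + a2 * x2%:Z + a3 * x3%:Z - u%:Z * a1 * a2 * a3 =
          phase + a3 * x3%:Z by rewrite /phase; ring.
by rewrite e_qD; ring.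
Qed.

End HhatSymmetry.

Lemma Hhat_eq0_of_dvd (R : realType) p D (xi : zD -> R[i]) gamma c0 k psi a1 a2 a3 :
  prime p ->
  (forall (M : nat) (a : int), (p%:Z %| a)%Z -> \sum_(x < p ^ k)
     Hfun p D xi gamma c0 k (M * x)%N%:Z 1 * e_q R (p ^ k) (a * x%:Z) = 0) ->
  (p%:Z %| a1 * a2 * a3)%Z -> Hhat p D xi gamma c0 k psi a1 a2 a3 = 0.
Proof.
move=> p_prime twisted_eq0; rewrite !dvdz_prime_mul // => /orP[/orP[]|] p_dvd_a.
- by rewrite Hhat_swap12 Hhat_swap23; apply: Hhat_eq0_of_twisted => M; apply: twisted_eq0.
- by rewrite Hhat_swap23; apply: Hhat_eq0_of_twisted => M; apply: twisted_eq0.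
- by apply: Hhat_eq0_of_twisted => M; apply: twisted_eq0.
Qed.

Theorem lemma5p2 (R : realType) (p : nat) (D : int) (xi : zD -> R[i])
    (gamma : R[i]) (c c0 k : nat) (psi : nat -> R[i]) (a1 a2 a3 : int) :
  quad_ext_data p D ->
  is_char_L p D xi ->
  not_galois_inv xi ->
  restricts_to_etaL D xi ->
  is_conductor p D xi c ->
  c = (ram_e p D * c0)%N ->
  `|gamma| = 1 ->
  (c0.+1 <= k)%N ->
  dirichlet_char (p ^ k) psi ->
  (p%:Z %| a1 * a2 * a3)%Z ->
  Hhat p D xi gamma c0 k psi a1 a2 a3 = 0.
Proof.
move=> L_data xi_char xi_ngal xi_eta [xi_triv_c _] cE _ c0_lt_k _ p_dvd_a.
have [p_prime p_odd _] := L_data.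
have xi_triv : trivial_mod_pow p D xi c0 by apply: trivial_mod_pow_of_U; rewrite -cE.
have c0_gt0 : (0 < c0)%N.
  rewrite lt0n; apply/eqP => c0_eq0.
  apply: (xi_nontrivial_on_units L_data xi_char xi_ngal xi_eta) => z z_unit.
  by apply: xi_triv; rewrite // c0_eq0 expn0 dvd1z.
case: k c0_lt_k p_dvd_a => // K; rewrite ltnS => c0_leK p_dvd_a.
apply: Hhat_eq0_of_dvd => // M a p_dvd; apply: sum_Hfun_twisted_eq0 => //.
- exact: leq_trans c0_gt0 c0_leK.
- by rewrite /kappa; case: ifP => // _; apply: ltnW.
Qed.
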